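(* Let $n\ge 6$ and $0\le \tau\le n-5$, and let $\Gamma_{n,\tau}$ be the signed graph defined in the context. Then: (i) $\lambda_1(\Gamma_{n,\tau})\le \lambda_1(\Gamma_{n,0})=\lambda_1(\Gamma_{n,n-5})$, with equality if and only if $\tau\in\{0,n-5\}$; (ii) $\lambda_1(\Gamma_{n,0})>n-4$, and $\lambda_1(\Gamma_{n,0})$ equals the largest root of $\lambda^3-(n-6)\lambda^2-3(n-4)\lambda-n+3=0$.
   Context: A signed graph is a simple graph whose edges carry signs $\pm1$; its adjacency matrix has entry $\sigma(uv)$ for adjacent $u,v$ and $0$ otherwise, and $\lambda_1(\cdot)$ denotes the largest eigenvalue of this matrix. For integers $n\ge 6$ and $0\le\tau\le n-5$, $\Gamma_{n,\tau}$ is the signed graph with vertex set $\{v_1,v_2,v_3,v_5\}\cup X\cup Y$ (disjoint union), where $|X|=\tau$, $|Y|=n-4-\tau$, and $v_4\in Y$, whose edges are: $v_1v_2$ (the only negative edge); $v_2v_3$; $v_1v_5$; $v_1x$ for all $x\in X$; $v_5x$ for all $x\in X$; $v_5y$ and $v_3y$ for all $y\in Y$; and all edges among vertices of $X\cup Y$ (so $X\cup Y$ induces a complete graph). There are no other edges; in particular $v_2$ has degree $2$, $v_1$ has degree $\tau+2$, $v_3v_5$ is not an edge, and $v_1v_2v_3v_4v_5v_1$ is an induced cycle. All edges other than $v_1v_2$ are positive. *)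

From HB Require Import structures.
From mathcomp Require Import all_boot all_order all_algebra.
From mathcomp Require Import boolp classical_sets reals.
Set Implicit Arguments. Unset Strict Implicit. Unset Printing Implicit Defensive.
Import Order.TTheory GRing.Theory Num.Theory.
Local Open Scope ring_scope.

(* Vertex numbering of Gamma_{n,tau} on 'I_n:
   0 = v1, 1 = v2, 2 = v3, 3 = v5,
   X = {4, ..., 3 + tau}, Y = {4 + tau, ..., n - 1} (v4 is any element of Y,
   e.g. 4 + tau). *)
Definition inX (tau i : nat) : bool := (4 <= i)%N && (i < 4 + tau)%N.
Definition inY (tau i : nat) : bool := (4 + tau <= i)%N.
Definition inXY (i : nat) : bool := (4 <= i)%N.

Definition pos_edge_dir (tau i j : nat) : bool :=
  [|| (i == 1%N) && (j == 2%N),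
      (i == 0%N) && (j == 3%N),
      (i == 0%N) && inX tau j,
      (i == 3%N) && inX tau j,
      (i == 3%N) && inY tau j,
      (i == 2%N) && inY tau j
    | [&& inXY i, inXY j & i != j] ].

Definition pos_edge (tau i j : nat) : bool :=
  pos_edge_dir tau i j || pos_edge_dir tau j i.

Definition neg_edge (i j : nat) : bool :=
  ((i == 0%N) && (j == 1%N)) || ((i == 1%N) && (j == 0%N)).

Definition Gamma {R : ringType} (n tau : nat) : 'M[R]_n :=
  \matrix_(i < n, j < n)
    (if neg_edge i j then -1 else if pos_edge tau i j then 1 else 0).

Definition lambda1 {R : realType} {n : nat} (A : 'M[R]_n) : R :=
  sup [set a : R | eigenvalue A a].

Definition is_largest_root {R : realType} (p : {poly R}) (l : R) : Prop :=
  root p l /\ forall r : R, root p r -> r <= l.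

From HB Require Import structures.
From mathcomp Require Import all_boot all_order all_algebra.
From mathcomp Require Import boolp classical_sets reals.
From mathcomp Require Import polyrcf ring lra zify.
Import Order.TTheory GRing.Theory Num.Theory.
Local Open Scope ring_scope.

(* The vertex partition {v1}, {v2}, {v3}, {v5}, X, Y of Gamma_{n,tau} is
   equitable.  For an eigenvector with eigenvalue a <> -1, the eigen-equations
   at the four singletons and summed over X and Y express everything through
   the entries p at v1 and r at v5, which must solve a 2 x 2 linear system
   whose determinant is
     quintic(a) = (a^2 - a - 1) c_n(a) + tau (n - 5 - tau) a (2a + 1),
   c_n the cubic of (ii).  So every eigenvalue is -1 or a root of the quintic,
   and conversely every root with a <> -1 and a^2 - a - 1 <> 0 is one.
   c_n is increasing on [n - 4, +oo) and has a root l > n - 4 there; for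
   a >= l both summands of the quintic are nonnegative, and they vanish
   together only at a = l and only when tau (n - 5 - tau) = 0.  Hence
   lambda1 = l for tau in {0, n - 5} and, the spectrum being finite,
   lambda1 < l otherwise. *)

Definition cubic {R : pzRingType} (N a : R) : R :=
  a ^+ 3 - (N - 6) * a ^+ 2 - 3 * (N - 4) * a - (N - 3).

Definition quintic {R : pzRingType} (N k a : R) : R :=
  (a ^+ 2 - a - 1) * cubic N a + k * (a * (2 * a + 1)).

Lemma horner_cubic (R : comNzRingType) (N x : R) :
  ('X^3 - (N - 6) *: 'X^2 - (3 * (N - 4)) *: 'X - (N - 3)%:P).[x] = cubic N x.
Proof. by rewrite !(hornerD, hornerN, hornerZ, hornerXn, hornerX, hornerC). Qed.

Lemma kernel2_eq0 {R : idomainType} {a b c d x y : R} :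
  a * x + b * y = 0 -> c * x + d * y = 0 -> a * d - b * c != 0 -> x = 0 /\ y = 0.
Proof.
move=> e1 e2 det_neq0.
have detx : (a * d - b * c) * x = d * (a * x + b * y) - b * (c * x + d * y).
  by ring.
have dety : (a * d - b * c) * y = a * (c * x + d * y) - c * (a * x + b * y).
  by ring.
rewrite e1 e2 !mulr0 subrr in detx dety.
by move: detx dety => /eqP + /eqP; rewrite !mulf_eq0 (negbTE det_neq0) => /eqP-> /eqP->.
Qed.

(* p, q, w, r are the entries of an eigenvector for a at v1, v2, v3, v5, and
   x, y its sums over X and Y, of sizes t and m; eliminating q, w, x, y leaves
   the system [kernel_eq1], [kernel_eq2] in (p, r), of determinant [quintic]. *)
Lemma quotient_kernel_trivial {R : fieldType} {t m a p q w r x y : R} :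
  a + 1 != 0 -> quintic (t + m + 4) (t * (m - 1)) a != 0 ->
  a * p = - q + r + x -> a * q = - p + w -> a * w = q + y -> a * r = p + x + y ->
  (a + 1) * x = t * (p + r + x + y) -> (a + 1) * y = m * (w + r + x + y) ->
  [/\ p = 0, q = 0, w = 0, r = 0 & x = 0 /\ y = 0].
Proof.
move=> a1_neq0 quintic_neq0 e_v1 e_v2 e_v3 e_v5 e_X e_Y.
have sum_v5 : p + r + x + y = (a + 1) * r by rewrite mulrDl mul1r e_v5; ring.
have x_def : x = t * r by apply: (mulfI a1_neq0); rewrite e_X sum_v5; ring.
have q_def : q = (t + 1) * r - a * p by rewrite e_v1 x_def; ring.
have w_def : w = p + a * q by rewrite e_v2; ring.
have y_def : y = (a - t) * r - p by rewrite -[y](addKr (p + x)) -e_v5 x_def; ring.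
have kernel_eq1 : (a + 1) * (a ^+ 2 - a - 1) * p + (a + 1 - (t + 1) * a ^+ 2) * r = 0.
  move/eqP: e_v3; rewrite eq_sym -subr_eq0 y_def w_def q_def => /eqP e_v3.
  by rewrite -e_v3; ring.
have kernel_eq2 : (m * a ^+ 2 - a - 1) * p
            + ((a + 1) * (a - t - m) - m * a * (t + 1)) * r = 0.
  move/eqP: e_Y; rewrite -subr_eq0 y_def w_def x_def q_def => /eqP e_Y.
  by rewrite -e_Y; ring.
have [p0 r0] : p = 0 /\ r = 0.
  apply: (kernel2_eq0 kernel_eq1 kernel_eq2).
  by rewrite (_ : _ - _ = quintic (t + m + 4) (t * (m - 1)) a) // /quintic /cubic; ring.
have q0 : q = 0 by rewrite q_def p0 r0; ring.
by rewrite w_def x_def y_def q0 p0 r0 !mulr0 addr0 subr0.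
Qed.

Lemma cubic_increasing {R : realFieldType} {N x y : R} :
  6 <= N -> N - 4 <= x -> x < y -> cubic N x < cubic N y.
Proof.
have [k ->] : exists k, N = k + 4 by exists (N - 4); ring.
move=> N_ge6 x_ge xy.
have -> : cubic (k + 4) y = cubic (k + 4) x
    + (y - x) * (y ^+ 2 + x * y + x ^+ 2 - (k - 2) * (x + y) - 3 * k).
  by rewrite /cubic; ring.
rewrite ltrDl; apply: mulr_gt0; first by rewrite subr_gt0.
have x_part : 0 <= (x - k) * x by apply: mulr_ge0; lra.
have y_part : 0 <= (y - k) * y by apply: mulr_ge0; lra.
have mixed_part : 0 <= (x - k) * y + k * (y - k).
  by apply: addr_ge0; apply: mulr_ge0; lra.
have k_part : 0 < k * k + k by nra.
nra.
Qed.

Lemma cubic_root_gt (R : rcfType) {n : nat} : (6 <= n)%N ->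
  exists2 l : R, n%:R - 4 < l & cubic n%:R l = 0.
Proof.
move=> n_ge6; have N_ge6 : (6 : R) <= n%:R by rewrite (ler_nat R 6 n).
set p : {poly R} := 'X^3 - (n%:R - 6) *: 'X^2 - (3 * (n%:R - 4)) *: 'X - (n%:R - 3)%:P.
have lo : cubic n%:R (n%:R - 4) = - ((n%:R - 4) ^+ 2 + (n%:R - 3)) :> R.
  by rewrite /cubic; ring.
have hi : cubic n%:R n%:R = 3 * n%:R ^+ 2 + 11 * n%:R + 3 :> R by rewrite /cubic; ring.
have sign_change : p.[n%:R - 4] <= 0 <= p.[n%:R].
  by rewrite !horner_cubic lo hi; apply/andP; split; nra.
have le_n : n%:R - 4 <= n%:R :> R by lra.
have [l /andP[l_ge _] /rootP pl0] := poly_ivt le_n sign_change.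
rewrite horner_cubic in pl0.
exists l => //; rewrite lt_neqAle l_ge andbT.
apply/eqP => l_eq; move/eqP: pl0; rewrite -l_eq lo oppr_eq0 gt_eqF //; nra.
Qed.

Lemma quintic_gt0 {R : realFieldType} {N k l a : R} :
  6 <= N -> N - 4 < l -> cubic N l = 0 -> 0 <= k -> l <= a -> 0 < k \/ l < a ->
  0 < quintic N k a.
Proof.
move=> N_ge6 l_gt cubic_l k_ge0 la k_gt0_or_lt.
have a_gt2 : 2 < a by lra.
have golden_gt0 : 0 < a ^+ 2 - a - 1 by nra.
have weight_gt0 : 0 < a * (2 * a + 1) by apply: mulr_gt0; lra.
have cubic_lt x : l < x -> 0 < cubic N x.
  by move=> lx; rewrite -cubic_l; apply: cubic_increasing => //; lra.
rewrite /quintic; case: k_gt0_or_lt => [k_gt0 | /cubic_lt cubic_gt0].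
- have cubic_ge0 : 0 <= cubic N a.
    by have [<-|la'] := eqVneq l a; [rewrite cubic_l | apply/ltW/cubic_lt; lra].
  by apply: ltr_wpDl; [apply: mulr_ge0; lra | apply: mulr_gt0].
- by apply: ltr_wpDr; [apply: mulr_ge0; lra | apply: mulr_gt0].
Qed.

Lemma lambda1_max (R : realType) n (A : 'M[R]_n) (l : R) :
  eigenvalue A l -> (forall a, eigenvalue A a -> a <= l) -> lambda1 A = l.
Proof.
move=> Al ub; apply/eqP; rewrite eq_le; apply/andP; split.
- by apply: ge_sup; [exists l | move=> a /ub].
- by apply: ub_le_sup => //; exists l => a /ub.
Qed.

Lemma lambda1_eigenvalue (R : realType) n (A : 'M[R]_n) (a : R) :
  eigenvalue A a -> eigenvalue A (lambda1 A).
Proof.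
set s := rootsR (char_poly A).
have eigen_s x : eigenvalue A x = (x \in s).
  rewrite eigenvalue_root_char -(roots_on_rootsR (monic_neq0 (char_poly_monic A))).
  by rewrite in_itv.
move=> Aa; set M := \big[Num.max/a]_(x <- s) x.
have M_s : M \in s.
  rewrite /M big_seq; apply: (big_ind (fun z => z \in s)) => // [|x y xs ys].
    by rewrite -eigen_s.
  by case: leP.
suff -> : lambda1 A = M by rewrite eigen_s.
apply: lambda1_max; first by rewrite eigen_s.
by move=> x; rewrite eigen_s => xs; apply: le_bigmax_seq.
Qed.

(* [0 < b] is needed because [sup set0 = 0]. *)
Lemma lambda1_lt (R : realType) n (A : 'M[R]_n) (b : R) :
  0 < b -> (forall a, eigenvalue A a -> a < b) -> lambda1 A < b.
Proof.
move=> b_gt0 ub; have [[a Aa] | no_eigen] := pselect (exists a, eigenvalue A a).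
  exact/ub/lambda1_eigenvalue/Aa.
rewrite /lambda1 (_ : mkset _ = set0) ?sup0 //.
by apply/seteqP; split => [a Aa | a []]; apply: no_eigen; exists a.
Qed.

Lemma sumr1_ord_interval (R : nzSemiRingType) (n lo hi : nat) : (hi <= n)%N ->
  \sum_(i < n | (lo <= i < hi)%N) (1 : R) = (hi - lo)%:R.
Proof.
move=> hi_le; rewrite -sumr_const_nat (big_nat_widen _ _ _ _ _ hi_le).
rewrite (big_nat_widenl _ _ _ _ _ (leq0n lo)) big_mkord.
by apply: eq_bigl => i; rewrite andbC.
Qed.

Lemma sumr1_inX (R : nzSemiRingType) (n tau : nat) : (4 + tau <= n)%N ->
  \sum_(i < n | inX tau i) (1 : R) = tau%:R.
Proof.
by move=> le_n; rewrite -[tau in RHS](addKn 4) -(@sumr1_ord_interval R _ 4 _ le_n).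
Qed.

Lemma sumr1_inY (R : nzSemiRingType) (n tau : nat) :
  \sum_(i < n | inY tau i) (1 : R) = (n - 4 - tau)%:R.
Proof.
rewrite -subnDA -(@sumr1_ord_interval R _ (4 + tau) _ (leqnn n)); apply: eq_bigl => i.
by rewrite ltn_ord andbT.
Qed.

Lemma inY_inX (tau i : nat) : (4 <= i)%N -> inY tau i = ~~ inX tau i.
Proof. by rewrite /inX /inY => ->; rewrite -leqNgt. Qed.

Definition class_sum {R : nzRingType} {n : nat} (v : 'rV[R]_n) (P : pred nat) : R :=
  \sum_(i < n | P i) v 0 i.

(* Each class C of the partition contributes [i \in C] times its signed
   adjacency to j; the last term removes the diagonal of the X u Y clique. *)
Definition Gamma_coef {R : nzRingType} (tau i j : nat) : R :=
    (i == 0%N)%:R * ((j == 3%N)%:R + (inX tau j)%:R - (j == 1%N)%:R)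
  + (i == 1%N)%:R * ((j == 2%N)%:R - (j == 0%N)%:R)
  + (i == 2%N)%:R * ((j == 1%N)%:R + (inY tau j)%:R)
  + (i == 3%N)%:R * ((j == 0%N)%:R + (inX tau j)%:R + (inY tau j)%:R)
  + (inX tau i)%:R * ((j == 0%N)%:R + (j == 3%N)%:R + (inXY j)%:R)
  + (inY tau i)%:R * ((j == 2%N)%:R + (j == 3%N)%:R + (inXY j)%:R)
  - (i == j)%:R * (inXY j)%:R.

Lemma Gamma_coefE (R : comNzRingType) (n tau : nat) (i j : 'I_n) :
  Gamma n tau i j = Gamma_coef tau i j :> R.
Proof.
rewrite /Gamma mxE /Gamma_coef /neg_edge /pos_edge /pos_edge_dir /inX /inY /inXY.
have ltX k : (k.+4 < 4 + tau)%N = (k < tau)%N by rewrite addnC addn4.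
have leY k : (4 + tau <= k.+4)%N = ~~ (k < tau)%N by rewrite -ltX ltnNge negbK.
case: (nat_of_ord i) => [|[|[|[|i']]]]; case: (nat_of_ord j) => [|[|[|[|j']]]].
all: rewrite ?ltX ?leY /= ?eqSS 1?[(j' == i')%N]eq_sym.
all: try case: (i' < tau)%N; try case: (j' < tau)%N; try case: (i' == j')%N.
all: rewrite /=; ring.
Qed.

Section ClassSums.
Context {R : nzRingType} {n : nat} (v : 'rV[R]_n).

Lemma class_sum_indicator (P : pred nat) :
  \sum_(i < n) v 0 i * (P i)%:R = class_sum v P.
Proof.
rewrite /class_sum [RHS]big_mkcond; apply: eq_bigr => i _.
by case: (P i); rewrite ?mulr1 ?mulr0.
Qed.

Lemma class_sum_pred1 (j : 'I_n) : class_sum v (pred1 (j : nat)) = v 0 j.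
Proof. by rewrite /class_sum (big_pred1 j). Qed.

Lemma class_sum_const {P : pred nat} {c K : R} :
  (forall j : 'I_n, P j -> c * v 0 j = K) -> c * class_sum v P = K * \sum_(i < n | P i) 1.
Proof.
by move=> PK; rewrite mulr_sumr mulr_sumr; apply: eq_bigr => j Pj; rewrite mulr1 PK.
Qed.

End ClassSums.

Section GammaColumns.
Context {R : comNzRingType} {n tau : nat} (v : 'rV[R]_n).

Local Notation w c := (class_sum v (pred1 c%N)).
Local Notation sX := (class_sum v (inX tau)).
Local Notation sY := (class_sum v (inY tau)).

Lemma mulmx_Gamma (j : 'I_n) : (v *m Gamma n tau) 0 j =
    w 0 * (((j : nat) == 3%N)%:R + (inX tau j)%:R - ((j : nat) == 1%N)%:R)
  + w 1 * (((j : nat) == 2%N)%:R - ((j : nat) == 0%N)%:R)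
  + w 2 * (((j : nat) == 1%N)%:R + (inY tau j)%:R)
  + w 3 * (((j : nat) == 0%N)%:R + (inX tau j)%:R + (inY tau j)%:R)
  + sX * (((j : nat) == 0%N)%:R + ((j : nat) == 3%N)%:R + (inXY j)%:R)
  + sY * (((j : nat) == 2%N)%:R + ((j : nat) == 3%N)%:R + (inXY j)%:R)
  - v 0 j * (inXY j)%:R.
Proof.
rewrite mxE; under eq_bigr => i _ do rewrite Gamma_coefE /Gamma_coef.
rewrite -(class_sum_pred1 v j) -!class_sum_indicator !mulr_suml -!big_split /= -sumrB.
by apply: eq_bigr => i _; ring.
Qed.

Lemma Gamma_col_v1 (j : 'I_n) : (j : nat) = 0%N ->
  (v *m Gamma n tau) 0 j = - w 1 + w 3 + sX.
Proof. by move=> j0; rewrite mulmx_Gamma j0 /=; ring. Qed.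

Lemma Gamma_col_v2 (j : 'I_n) : (j : nat) = 1%N ->
  (v *m Gamma n tau) 0 j = - w 0 + w 2.
Proof. by move=> j1; rewrite mulmx_Gamma j1 /=; ring. Qed.

Lemma Gamma_col_v3 (j : 'I_n) : (j : nat) = 2%N ->
  (v *m Gamma n tau) 0 j = w 1 + sY.
Proof. by move=> j2; rewrite mulmx_Gamma j2 /=; ring. Qed.

Lemma Gamma_col_v5 (j : 'I_n) : (j : nat) = 3%N ->
  (v *m Gamma n tau) 0 j = w 0 + sX + sY.
Proof. by move=> j3; rewrite mulmx_Gamma j3 /=; ring. Qed.

Lemma Gamma_col_X (j : 'I_n) : inX tau j ->
  (v *m Gamma n tau) 0 j = w 0 + w 3 + sX + sY - v 0 j.
Proof.
move=> Xj; have notYj : inY tau j = false by move: Xj; rewrite /inX /inY; lia.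
have j_ge4 : (4 <= j)%N by case/andP: Xj.
rewrite mulmx_Gamma Xj notYj; case: (nat_of_ord j) j_ge4 => [|[|[|[|k]]]] //= _; ring.
Qed.

Lemma Gamma_col_Y (j : 'I_n) : inY tau j ->
  (v *m Gamma n tau) 0 j = w 2 + w 3 + sX + sY - v 0 j.
Proof.
move=> Yj; have notXj : inX tau j = false by move: Yj; rewrite /inX /inY; lia.
have j_ge4 : (4 <= j)%N by move: Yj; rewrite /inY; lia.
rewrite mulmx_Gamma Yj notXj; case: (nat_of_ord j) j_ge4 => [|[|[|[|k]]]] //= _; ring.
Qed.

End GammaColumns.

Section GammaEigenvector.
Context {R : comNzRingType} {n tau : nat} {a : R} {v : 'rV[R]_n}.
Context (n_ge : (tau + 5 <= n)%N) (v_eigen : v *m Gamma n tau = a *: v).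

Local Notation w c := (class_sum v (pred1 c%N)).
Local Notation sX := (class_sum v (inX tau)).
Local Notation sY := (class_sum v (inY tau)).

Lemma Gamma_eigen_singletons :
  [/\ a * w 0 = - w 1 + w 3 + sX, a * w 1 = - w 0 + w 2,
      a * w 2 = w 1 + sY & a * w 3 = w 0 + sX + sY].
Proof.
have eigen_at k (k_lt : (k < n)%N) : a * w k = (v *m Gamma n tau) 0 (Ordinal k_lt).
  by rewrite v_eigen mxE -(class_sum_pred1 v (Ordinal k_lt)).
have lt_n k : (k <= 3)%N -> (k < n)%N by lia.
split; [ rewrite (eigen_at 0%N (lt_n 0%N isT)) Gamma_col_v1
       | rewrite (eigen_at 1%N (lt_n 1%N isT)) Gamma_col_v2
       | rewrite (eigen_at 2%N (lt_n 2%N isT)) Gamma_col_v3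
       | rewrite (eigen_at 3%N (lt_n 3%N isT)) Gamma_col_v5 ] => //.
Qed.

Lemma Gamma_eigen_X_entry (j : 'I_n) :
  inX tau j -> (a + 1) * v 0 j = w 0 + w 3 + sX + sY.
Proof.
move=> Xj; have := Gamma_col_X v j Xj; rewrite v_eigen mxE => col_j.
by rewrite mulrDl mul1r col_j subrK.
Qed.

Lemma Gamma_eigen_Y_entry (j : 'I_n) :
  inY tau j -> (a + 1) * v 0 j = w 2 + w 3 + sX + sY.
Proof.
move=> Yj; have := Gamma_col_Y v j Yj; rewrite v_eigen mxE => col_j.
by rewrite mulrDl mul1r col_j subrK.
Qed.

Lemma Gamma_eigen_X_sum : (a + 1) * sX = tau%:R * (w 0 + w 3 + sX + sY).
Proof.
by rewrite (class_sum_const v Gamma_eigen_X_entry) sumr1_inX 1?mulrC //; lia.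
Qed.

Lemma Gamma_eigen_Y_sum : (a + 1) * sY = (n - 4 - tau)%:R * (w 2 + w 3 + sX + sY).
Proof. by rewrite (class_sum_const v Gamma_eigen_Y_entry) sumr1_inY mulrC. Qed.

End GammaEigenvector.

Lemma natr_Gamma_sizes (R : nzRingType) {n tau : nat} : (tau + 5 <= n)%N ->
  n%:R = tau%:R + (n - 4 - tau)%:R + 4 :> R
  /\ (tau * (n - 5 - tau))%:R = tau%:R * ((n - 4 - tau)%:R - 1) :> R.
Proof.
move=> n_ge; split; first by rewrite -!natrD; congr (_%:R); lia.
by rewrite (_ : (n - 4 - tau = (n - 5 - tau) + 1)%N) ?natrD ?addrK ?natrM //; lia.
Qed.

Lemma Gamma_eigenvalue_root (R : fieldType) (n tau : nat) (a : R) : (tau + 5 <= n)%N ->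
  eigenvalue (Gamma n tau) a -> a = -1 \/ quintic n%:R (tau * (n - 5 - tau))%:R a = 0.
Proof.
move=> n_ge /eigenvalueP[v v_eigen v_neq0].
have [-> | a1_neq0] := eqVneq a (-1); [by left | right; rewrite -addr_eq0 in a1_neq0].
have [-> ->] := natr_Gamma_sizes R n_ge.
apply/eqP; apply: contraNT v_neq0 => quintic_neq0.
have [e_v1 e_v2 e_v3 e_v5] := Gamma_eigen_singletons n_ge v_eigen.
have [p0 q0 w0 r0 [x0 y0]] := quotient_kernel_trivial a1_neq0 quintic_neq0
  e_v1 e_v2 e_v3 e_v5 (Gamma_eigen_X_sum n_ge v_eigen) (Gamma_eigen_Y_sum v_eigen).
apply/eqP/rowP => j; rewrite mxE.
have [j_ge4 | j_lt4] := leqP 4 j; last first.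
  by rewrite -class_sum_pred1; move: j_lt4; case: (nat_of_ord j) => [|[|[|[|k]]]].
apply: (mulfI a1_neq0); rewrite mulr0.
have [Xj | notXj] := boolP (inX tau j).
  by rewrite (Gamma_eigen_X_entry v_eigen j Xj) p0 r0 x0 y0 !addr0.
have Yj : inY tau j by rewrite inY_inX.
by rewrite (Gamma_eigen_Y_entry v_eigen j Yj) w0 r0 x0 y0 !addr0.
Qed.

Definition class_entry {R : Type} (tau : nat) (e1 e2 e3 e5 eX eY : R) (i : nat) : R :=
  if inX tau i then eX else if inY tau i then eY
  else if i == 0%N then e1 else if i == 1%N then e2 else if i == 2%N then e3 else e5.

Definition class_row {R : nzRingType} (n tau : nat) (e1 e2 e3 e5 eX eY : R) : 'rV[R]_n :=
  \row_(i < n) class_entry tau e1 e2 e3 e5 eX eY i.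

Lemma scale_class_row (R : nzRingType) (n tau : nat) (c e1 e2 e3 e5 eX eY : R) :
  c *: class_row n tau e1 e2 e3 e5 eX eY
  = class_row n tau (c * e1) (c * e2) (c * e3) (c * e5) (c * eX) (c * eY).
Proof. by apply/rowP => i; rewrite !mxE /class_entry; do !case: ifP. Qed.

Lemma mulmx_Gamma_class_row (R : comNzRingType) (n tau : nat) (e1 e2 e3 e5 eX eY : R) :
  (tau + 5 <= n)%N ->
  let t := tau%:R in let m := (n - 4 - tau)%:R in
  class_row n tau e1 e2 e3 e5 eX eY *m Gamma n tau
  = class_row n tau (- e2 + e5 + t * eX) (- e1 + e3) (e2 + m * eY)
      (e1 + t * eX + m * eY) (e1 + e5 + (t - 1) * eX + m * eY)
      (e3 + e5 + t * eX + (m - 1) * eY).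
Proof.
move=> n_ge t m; set v := class_row _ _ _ _ _ _ _ _.
have v_at k (k_lt : (k < n)%N) :
    class_sum v (pred1 k) = class_entry tau e1 e2 e3 e5 eX eY k.
  by rewrite (class_sum_pred1 v (Ordinal k_lt)) mxE.
have lt_n k : (k <= 3)%N -> (k < n)%N by lia.
have class_sum_v (P : pred nat) K :
    (forall i : 'I_n, P i -> v 0 i = K) -> class_sum v P = K * \sum_(i < n | P i) 1.
  move=> vK; rewrite -[class_sum _ _]mul1r.
  by apply: class_sum_const => j Pj; rewrite mul1r vK.
have sX : class_sum v (inX tau) = eX * t.
  rewrite (class_sum_v _ eX) ?sumr1_inX //; first lia.
  by move=> i Xi; rewrite mxE /class_entry Xi.
have sY : class_sum v (inY tau) = eY * m.
  rewrite (class_sum_v _ eY) ?sumr1_inY // => i Yi.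
  by rewrite mxE /class_entry Yi ifF //; move: Yi; rewrite /inX /inY; lia.
apply/rowP => j; rewrite [RHS]mxE.
have [j_ge4 | j_lt4] := leqP 4 j.
  have [Xj | notXj] := boolP (inX tau j).
    by rewrite Gamma_col_X // sX sY !v_at ?lt_n // mxE /class_entry Xj /=; ring.
  have Yj : inY tau j by rewrite inY_inX.
  rewrite Gamma_col_Y // sX sY !v_at ?lt_n // mxE /class_entry (negbTE notXj) Yj /=.
  by ring.
rewrite /class_entry; case jE: (nat_of_ord j) j_lt4 => [|[|[|[|k]]]] //= _.
- by rewrite Gamma_col_v1 // sX !v_at ?lt_n // /class_entry /=; ring.
- by rewrite Gamma_col_v2 // !v_at ?lt_n // /class_entry /=; ring.
- by rewrite Gamma_col_v3 // sY !v_at ?lt_n // /class_entry /=; ring.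
- by rewrite Gamma_col_v5 // sX sY !v_at ?lt_n // /class_entry /=; ring.
Qed.

Lemma Gamma_eigenvalue_of_root (R : fieldType) (n tau : nat) (a : R) : (tau + 5 <= n)%N ->
  a + 1 != 0 -> a ^+ 2 - a - 1 != 0 -> quintic n%:R (tau * (n - 5 - tau))%:R a = 0 ->
  eigenvalue (Gamma n tau) a.
Proof.
move=> n_ge a1_neq0 golden_neq0; have [-> ->] := natr_Gamma_sizes R n_ge.
set t : R := tau%:R; set m : R := (n - 4 - tau)%:R => quintic0.
(* (p, r) spans the kernel of [kernel_eq1] in [quotient_kernel_trivial], and
   [kernel_eq2] then reduces to [quintic0]; the entries are scaled by a + 1 so
   that those on Y need no division. *)
pose p := (t + 1) * a ^+ 2 - a - 1; pose r := (a + 1) * (a ^+ 2 - a - 1).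
pose q := (t + 1) * r - a * p.
have by_quintic x y : x - y = - quintic (t + m + 4) (t * (m - 1)) a -> x = y.
  by move/eqP; rewrite quintic0 oppr0 subr_eq0 => /eqP.
apply/eigenvalueP; exists (class_row n tau ((a + 1) * p) ((a + 1) * q)
  ((a + 1) * (p + a * q)) ((a + 1) * r) ((a + 1) * r) ((a + 1) * r + a * q)); last first.
  have lt3 : (3 < n)%N by lia.
  apply/eqP => /rowP /(_ (Ordinal lt3)); rewrite !mxE /= => /eqP.
  by rewrite !mulf_eq0 (negbTE a1_neq0) (negbTE golden_neq0).
rewrite mulmx_Gamma_class_row // scale_class_row -/t -/m.
congr class_row; try by rewrite /q /p /r; ring.
all: apply: by_quintic; rewrite /q /p /r /quintic /cubic; ring.
Qed.

Lemma Gamma_eigenvalue_le {R : realFieldType} {n tau : nat} {l a : R} :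
  (6 <= n)%N -> (tau <= n - 5)%N -> n%:R - 4 < l -> cubic n%:R l = 0 ->
  eigenvalue (Gamma n tau) a -> a <= l /\ ((tau * (n - 5 - tau) != 0)%N -> a < l).
Proof.
move=> n_ge6 tau_le l_gt cubic_l.
have N_ge6 : (6 : R) <= n%:R by rewrite (ler_nat R 6 n).
move=> /(Gamma_eigenvalue_root _) [|->|quintic_a0]; first lia.
  by split=> [|_]; lra.
have k_ge0 : (0 : R) <= (tau * (n - 5 - tau))%:R by rewrite ler0n.
have quintic_gt0_above := quintic_gt0 N_ge6 l_gt cubic_l k_ge0.
split=> [|k_neq0].
  rewrite leNgt; apply/negP => l_a.
  by move: (quintic_gt0_above _ (ltW l_a) (or_intror l_a)); rewrite quintic_a0 ltxx.
have k_gt0 : (0 : R) < (tau * (n - 5 - tau))%:R by rewrite ltr0n lt0n.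
rewrite ltNge; apply/negP => l_a.
by move: (quintic_gt0_above _ l_a (or_introl k_gt0)); rewrite quintic_a0 ltxx.
Qed.

Lemma Gamma_eigenvalue_cubic_root {R : realFieldType} {n tau : nat} {l : R} :
  (6 <= n)%N -> (tau <= n - 5)%N -> (tau * (n - 5 - tau) = 0)%N ->
  n%:R - 4 < l -> cubic n%:R l = 0 -> eigenvalue (Gamma n tau) l.
Proof.
move=> n_ge6 tau_le k0 l_gt cubic_l.
have N_ge6 : (6 : R) <= n%:R by rewrite (ler_nat R 6 n).
apply: Gamma_eigenvalue_of_root; first lia.
- by rewrite gt_eqF //; lra.
- by rewrite gt_eqF //; nra.
- by rewrite /quintic cubic_l k0 !mul0r mulr0 addr0.
Qed.

Theorem lemma2p2 (R : realType) (n tau : nat) :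
  (6 <= n)%N -> (tau <= n - 5)%N ->
  (* (i) *)
  (lambda1 (Gamma (R := R) n tau) <= lambda1 (Gamma (R := R) n 0)
   /\ lambda1 (Gamma (R := R) n 0) = lambda1 (Gamma (R := R) n (n - 5))
   /\ (lambda1 (Gamma (R := R) n tau) = lambda1 (Gamma (R := R) n 0)
       <-> (tau = 0%N \/ tau = (n - 5)%N)))
  /\
  (* (ii) *)
  ((n%:R - 4 < lambda1 (Gamma (R := R) n 0))
   /\ is_largest_root
        ('X^3 - (n%:R - 6) *: 'X^2 - (3 * (n%:R - 4)) *: 'X
         - (n%:R - 3)%:P)
        (lambda1 (Gamma (R := R) n 0))).
Proof.
move=> n_ge6 tau_le; have [l l_gt cubic_l] := cubic_root_gt R n_ge6.
have N_ge6 : (6 : R) <= n%:R by rewrite (ler_nat R 6 n).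
have lambda1_boundary t : (t <= n - 5)%N -> (t * (n - 5 - t) = 0)%N ->
    lambda1 (Gamma (R := R) n t) = l.
  move=> t_le t_extreme; apply: lambda1_max; first exact: Gamma_eigenvalue_cubic_root.
  by move=> a /(Gamma_eigenvalue_le n_ge6 t_le l_gt cubic_l)[].
have lambda1_interior : (tau * (n - 5 - tau) != 0)%N -> lambda1 (Gamma (R := R) n tau) < l.
  move=> tau_interior; apply: lambda1_lt; first lra.
  by move=> a /(Gamma_eigenvalue_le n_ge6 tau_le l_gt cubic_l)[_]; apply.
have extremeE : (tau * (n - 5 - tau) == 0)%N = (tau == 0%N) || (tau == n - 5)%N.
  by rewrite muln_eq0 subn_eq0; apply/orP/orP; case; lia.
have lambda1_0 := lambda1_boundary 0%N (leq0n _) (mul0n _).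
have lambda1_5 : lambda1 (Gamma (R := R) n (n - 5)) = l.
  by apply: lambda1_boundary; rewrite ?subnn ?muln0.
rewrite lambda1_0 lambda1_5; split.
  have [/eqP|tau_interior] := eqVneq (tau * (n - 5 - tau))%N 0%N.
    rewrite extremeE => /orP[] /eqP->; rewrite ?lambda1_0 ?lambda1_5.
    - by split=> //; split=> //; split=> // _; left.
    - by split=> //; split=> //; split=> // _; right.
  have lt_l := lambda1_interior tau_interior.
  move: tau_interior; rewrite extremeE negb_or => /andP[/eqP tau_neq0 /eqP tau_neq5].
  by split; [exact: ltW | split=> //; split=> [E|[]//]; move: lt_l; rewrite E ltxx].
split=> //; split=> [|r]; rewrite /root horner_cubic ?cubic_l // => /eqP cubic_r.
rewrite leNgt; apply/negP => l_r.
by move: (cubic_increasing N_ge6 (ltW l_gt) l_r); rewrite cubic_l cubic_r ltxx.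
Qed.
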